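(* Let the standing assumptions (listed in the context) hold. Let $(x_k)$ have a cluster point $x^*$ such that $\mathcal{J}|_{\mathcal{N}}$ is strongly convex, where $\mathcal{N}\subset\Omega$ is a convex neighborhood of $x^*$. Then $\lim_{k\to\infty}x_k=x^*$.
   Context: Let $\mathcal{X}$ be a Hilbert space and $\mathcal{J}:\mathcal{X}\to\mathbb{R}$. Algorithm SLBFGS (structured inverse L-BFGS): inputs $x_0\in\mathcal{X}$, $\epsilon\geq0$, $\ell\in\mathbb{N}_0$, $c_0\geq 0$, $C_0\in[c_0,\infty]$, $c_s,c_1,c_2>0$; let $\tau_0>0$. For $k=0,1,2,\ldots$: let $m=\max\{0,k-\ell\}$; choose a symmetric positive semi-definite bounded linear operator $S_k$; set $B_k^{(0)}=\tau_k I+S_k$; let $B_k$ be obtained from $B_k^{(0)}$ and the currently stored pairs $(s_j,y_j)$, $m\le j\le k-1$, by successive L-BFGS updates $B\mapsto B+\frac{yy^T}{y^Ts}-\frac{Bss^TB}{s^TBs}$; set $d_k=-B_k^{-1}\nabla\mathcal{J}(x_k)$; compute a step length $\alpha_k>0$ by a line search; set $s_k=\alpha_kd_k$, $x_{k+1}=x_k+s_k$, $y_k=\nabla\mathcal{J}(x_{k+1})-\nabla\mathcal{J}(x_k)$; store $(s_k,y_k)$ only if $y_k^Ts_k>c_s\|s_k\|^2$; if $k\ge\ell$ remove $(s_m,y_m)$ from storage; stop with output $x_{k+1}$ if $\|\nabla\mathcal{J}(x_{k+1})\|\le\epsilon$; set $z_k=y_k-S_{k+1}s_k$, $\omega^l_{k+1}=\min\{c_0,c_1\|\nabla\mathcal{J}(x_{k+1})\|^{c_2}\}$,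 $\omega^u_{k+1}=\max\{C_0,(c_1\|\nabla\mathcal{J}(x_{k+1})\|^{c_2})^{-1}\}$; with $P(t)=\min\{\max\{t,\omega^l_{k+1}\},\omega^u_{k+1}\}$ and $\rho=z_k^Ts_k$ let $\tau^s=P(\rho/\|s_k\|^2)$, $\tau^g=P(\|z_k\|/\|s_k\|)$, $\tau^z=P(\|z_k\|^2/\rho)$; if $\rho>0$ choose $\tau_{k+1}\in[\tau^s,\tau^z]$, else choose $\tau_{k+1}\in[\tau^s,\tau^g]$. Line searches: Armijo with backtracking means, for fixed $\beta,\sigma\in(0,1)$, $\alpha_k$ is the largest number in $\{1,\beta,\beta^2,\ldots\}$ with $\mathcal{J}(x_{k+1})\le\mathcal{J}(x_k)+\alpha_k\sigma\nabla\mathcal{J}(x_k)^Td_k$; the Wolfe–Powell conditions are this Armijo inequality together with $\nabla\mathcal{J}(x_{k+1})^Td_k\ge\eta\nabla\mathcal{J}(x_k)^Td_k$ for fixed $\eta\in(\sigma,1)$. Let $\Omega=\{x:\mathcal{J}(x)\le\mathcal{J}(x_0)\}$. Standing assumptions: 1) $\mathcal{J}$ is continuously differentiable and bounded below; 2) $\nabla\mathcal{J}$ is Lipschitz continuous on $\Omega$ with constant $L>0$; 3) $(\|S_k\|)$ is bounded; 4) the step sizes consistently satisfy the Armijo condition computed by backtracking, or consistently satisfy the Wolfe–Powell conditions (no uniform continuity assumption on a neighborhood of $\Omega$ is required); 5) $c_0=0$ is only chosen if then $\sup_k\|(B_k^{(0)})^{-1}\|<\infty$; 6) $C_0=\infty$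 is only chosen if either the interval $[\tau^s,\tau^z]$ is replaced by $[\tau^s,\tau^g]$, or $\mathcal{J}$ is twice continuously differentiable, $\int_0^1\nabla^2\mathcal{J}(x_k+ts_k)\,dt-S_{k+1}$ is symmetric positive semi-definite for all $k$ with bounded norms; 7) the algorithm is run with $\epsilon=0$ and generates an infinite sequence $(x_k)$; 8) $(\|B_k\|)$ and $(\|B_k^{-1}\|)$ are bounded. *)

From HB Require Import structures.
From mathcomp Require Import all_boot all_order all_algebra.
From mathcomp Require Import all_classical all_reals all_analysis.
Set Implicit Arguments. Unset Strict Implicit. Unset Printing Implicit Defensive.
Import Order.TTheory GRing.Theory Num.Theory.
Import numFieldNormedType.Exports.
Local Open Scope classical_set_scope.
Local Open Scope ring_scope.

Section SLBFGS.
Context {R : realType} {V : normedModType R}.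

(** [ip] is an inner product inducing the norm of [V]; together with the
    completeness of [V] (a binder [V : completeNormedModType R] in the
    theorem) this makes [V] a real Hilbert space. *)
Definition inner_product (ip : V -> V -> R) : Prop :=
  [/\ (forall u v, ip u v = ip v u),
      (forall (a : R) u v w, ip (a *: u + v) w = a * ip u w + ip v w)
    & (forall u, `|u| = Num.sqrt (ip u u))].

Variable ip : V -> V -> R.

Definition is_C1_gradient (J : V -> R) (g : V -> V) : Prop :=
  (forall x, differentiable J x /\ forall h, 'd J x h = ip (g x) h)
  /\ continuous g.

Definition is_C2 (g : V -> V) : Prop :=
  (forall x, differentiable g x) /\
  forall x (eps : R), 0 < eps -> exists2 delta : R, 0 < delta &
    forall y, `|y - x| < delta -> forall u, `|'d g y u - 'd g x u| <= eps * `|u|.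

Definition bounded_linear (A : V -> V) : Prop :=
  (forall (a : R) u v, A (a *: u + v) = a *: A u + A v) /\
  exists M : R, forall v, `|A v| <= M * `|v|.

Definition sym_psd (A : V -> V) : Prop :=
  [/\ bounded_linear A, (forall u v, ip (A u) v = ip u (A v))
    & forall v, 0 <= ip (A v) v].

(** one L-BFGS update  B |-> B + y y^T/(y^T s) - B s s^T B/(s^T B s) *)
Definition lbfgs_update (B : V -> V) (s y : V) : V -> V :=
  fun v => B v + (ip y v / ip y s) *: y - (ip (B s) v / ip s (B s)) *: B s.

(** indices j, m <= j <= k-1 (m = max{0,k-l}), of the pairs in storage at
    iteration k: those that satisfied the curvature test y_j^T s_j > c_s |s_j|^2 *)
Definition stored (l : nat) (cs : R) (s y : nat -> V) (k : nat) : seq nat :=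
  [seq j <- iota (k - l) (k - (k - l)) | cs * `|s j| ^+ 2 < ip (y j) (s j)].

Definition lbfgs_matrix (B0 : V -> V) (l : nat) (cs : R) (s y : nat -> V)
    (k : nat) : V -> V :=
  foldl (fun B j => lbfgs_update B (s j) (y j)) B0 (stored l cs s y k).

Definition omega_l (c0 c1 c2 gn : R) : R := Num.min c0 (c1 * gn `^ c2).
Definition omega_u (C0 : \bar R) (c1 c2 gn : R) : \bar R :=
  Order.max C0 ((c1 * gn `^ c2)^-1)%:E.
Definition Pproj (wl : R) (wu : \bar R) (t : R) : \bar R :=
  Order.min (Num.max t wl)%:E wu.

(** The choice of tau_{k+1}.  [gonly = true] is the variant in which the
    interval [tau^s, tau^z] is replaced by [tau^s, tau^g]. *)
Definition tau_rule (gonly : bool) (c0 : R) (C0 : \bar R) (c1 c2 : R)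
    (sk zk gnext : V) (tau_next : R) : Prop :=
  let rho := ip zk sk in
  let P := Pproj (omega_l c0 c1 c2 `|gnext|) (omega_u C0 c1 c2 `|gnext|) in
  let ts := P (rho / `|sk| ^+ 2) in
  let tg := P (`|zk| / `|sk|) in
  let tz := P (`|zk| ^+ 2 / rho) in
  if (0 < rho) && ~~ gonly then (ts <= tau_next%:E <= tz)%E
  else (ts <= tau_next%:E <= tg)%E.

Definition armijo (J : V -> R) (g : V -> V) (sigma : R) (xk dk : V) (a : R) : Prop :=
  J (xk + a *: dk) <= J xk + a * sigma * ip (g xk) dk.

Definition armijo_backtracking (J : V -> R) (g : V -> V) (beta sigma : R)
    (xk dk : V) (a : R) : Prop :=
  exists n : nat, [/\ a = beta ^+ n, armijo J g sigma xk dk (beta ^+ n)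
                    & forall i, (i < n)%N -> ~ armijo J g sigma xk dk (beta ^+ i)].

Definition wolfe_powell (J : V -> R) (g : V -> V) (sigma eta : R)
    (xk dk : V) (a : R) : Prop :=
  armijo J g sigma xk dk a /\ eta * ip (g xk) dk <= ip (g (xk + a *: dk)) dk.

Definition convex_set_seg (N : set V) : Prop :=
  forall a b (t : R), N a -> N b -> 0 <= t <= 1 -> N (t *: a + (1 - t) *: b).

Definition strongly_convex_on (J : V -> R) (N : set V) : Prop :=
  exists2 mu : R, 0 < mu & forall a b (t : R), N a -> N b -> 0 <= t <= 1 ->
    J (t *: a + (1 - t) *: b) <=
      t * J a + (1 - t) * J b - mu / 2 * t * (1 - t) * `|a - b| ^+ 2.

(** averaged Hessian in weak form:  <(int_0^1 H(x + t s) dt) u, v> *)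
Definition avg_hessian_form (g : V -> V) (x s u v : V) : R :=
  (\int[lebesgue_measure]_(t in `[0%R, 1%R]) ip ('d g (x + t *: s) u) v)%R.

End SLBFGS.

From HB Require Import structures.
From mathcomp Require Import all_boot all_order all_algebra.
From mathcomp Require Import all_classical all_reals all_analysis.
From mathcomp Require Import ring lra.
Import Order.TTheory GRing.Theory Num.Theory.
Import numFieldNormedType.Exports.
Local Open Scope classical_set_scope.
Local Open Scope ring_scope.

(* Every B_k is self-adjoint and positive semidefinite (L-BFGS updates with
   positive curvature y^T s > 0 preserve this), and by 8) B_k and B_k^-1 are
   uniformly bounded; hence d_k is uniformly gradient related and the Armijo
   condition gives  sigma |s_k| |g_k| <= C^2 (J(x_k) - J(x_{k+1})).  Near xstar,
   convexity bounds J(x_k) - J(xstar) by |g_k| |xstar - x_k|, so that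
   |s_k| = O(|xstar - x_k|).  Along iterates approaching xstar, a rejected
   backtracking step (via the mean value theorem) or the Wolfe condition yields
   a point w near x_k with  (1 - eta) (-g_k^T d_k) <= (g(w) - g_k)^T d_k, which
   by continuity of g forces g_k, hence g(xstar), to vanish.  Strong convexity
   then gives the quadratic growth  mu/2 |v - xstar|^2 <= J(v) - J(xstar)  on N,
   and since J(x_k) decreases, an iterate close to xstar with value close to
   J(xstar) traps all later iterates near xstar. *)

Lemma quadratic_ge0_discriminant {R : realFieldType} (a b c : R) : 0 <= c ->
  (forall t, 0 <= a - 2 * t * b + t ^+ 2 * c) -> b ^+ 2 <= a * c.
Proof.
move=> c_ge0 q_ge0.
have [c_gt0|] := ltP 0 c.
  have := q_ge0 (b / c).
  have -> : a - 2 * (b / c) * b + (b / c) ^+ 2 * c = a - b ^+ 2 / c.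
    by field; rewrite gt_eqF.
  by rewrite subr_ge0 ler_pdivrMr.
move=> c_le0; have c0 : c = 0 by apply: le_anti; rewrite c_le0.
subst c; rewrite mulr0; have [-> |b_neq0] := eqVneq b 0; first by rewrite expr0n.
have := q_ge0 ((a + 1) / (2 * b)).
have -> : a - 2 * ((a + 1) / (2 * b)) * b + ((a + 1) / (2 * b)) ^+ 2 * 0 = -1.
  by rewrite mulr0 addr0; field.
by rewrite leNgt ltrN10.
Qed.

Lemma ler_of_sqr_le_mul {R : realDomainType} (G b : R) : 0 <= b ->
  G ^+ 2 <= b * G -> G <= b.
Proof.
move=> b_ge0; have [G_le0 _|G_gt0] := leP G 0; first exact: le_trans b_ge0.
by rewrite expr2 ler_pM2r.
Qed.

Lemma cluster_seq_dist_lt {R : realType} {V : normedModType R} {x : nat -> V} {p} :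
  cluster (x @ \oo) p -> forall {e : R}, 0 < e -> exists k, `|p - x k| < e.
Proof.
move=> x_cluster e e_gt0.
have x_range : (x @ \oo) (range x) by exists 0%N => // n _; exists n.
have [_ [[k _ <-]]] := x_cluster _ _ x_range (nbhsx_ballx p _ e_gt0).
by rewrite -ball_normE; exists k.
Qed.

Lemma continuous_dist_lt {R : realType} {V W : normedModType R} {f : V -> W} {p} :
  {for p, continuous f} -> forall {e : R}, 0 < e ->
  exists2 del : R, 0 < del & forall v, `|p - v| < del -> `|f p - f v| < e.
Proof.
move=> /cvgrPdist_lt f_cont e /f_cont /nbhs_ballP[del del_gt0 close].
by exists del => // v v_close; apply: close; rewrite -ball_normE.
Qed.

Lemma norm_le_scale_eq0 {R : realType} {V : normedModType R} (v : V) (K : R) :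
  0 <= K -> (forall e, 0 < e -> `|v| <= K * e) -> v = 0.
Proof.
move=> K_ge0 v_small; apply/normr0_eq0/eqP; rewrite eq_le normr_ge0 andbT.
apply/ler_addgt0Pr => e e_gt0; have K1_gt0 : 0 < K + 1 by rewrite ltr_wpDl.
rewrite add0r -(divfK (lt0r_neq0 K1_gt0) e) mulrC.
by apply: le_trans (v_small _ (divr_gt0 e_gt0 K1_gt0)) _; rewrite ler_wpM2r ?lerDl // ltW // divr_gt0.
Qed.

Definition psd_selfadjoint {R : realType} {V : normedModType R}
    (ip : V -> V -> R) (A : V -> V) :=
  [/\ (forall a u v, A (a *: u + v) = a *: A u + A v),
      (forall u v, ip (A u) v = ip u (A v))
    & (forall v, 0 <= ip (A v) v)].

Section InnerProduct.
Context {R : realType} {V : normedModType R} {ip : V -> V -> R}.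
Hypothesis ip_inner : inner_product ip.

Lemma ipC u v : ip u v = ip v u.
Proof. by case: ip_inner. Qed.

Lemma ipZDl a u v w : ip (a *: u + v) w = a * ip u w + ip v w.
Proof. by case: ip_inner. Qed.

Lemma ip0l w : ip 0 w = 0.
Proof. by have := ipZDl 1 0 0 w; rewrite addr0 scaler0 mul1r => ?; lra. Qed.

Lemma ipZl a u w : ip (a *: u) w = a * ip u w.
Proof. by have := ipZDl a u 0 w; rewrite !addr0 ip0l addr0. Qed.

Lemma ipDl u v w : ip (u + v) w = ip u w + ip v w.
Proof. by have := ipZDl 1 u v w; rewrite scale1r mul1r. Qed.

Lemma ipNl u w : ip (- u) w = - ip u w.
Proof. by rewrite -scaleN1r ipZl mulN1r. Qed.

Lemma ipBl u v w : ip (u - v) w = ip u w - ip v w.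
Proof. by rewrite ipDl ipNl. Qed.

Lemma ipZr a u w : ip w (a *: u) = a * ip w u.
Proof. by rewrite ipC ipZl ipC. Qed.

Lemma ipDr u v w : ip w (u + v) = ip w u + ip w v.
Proof. by rewrite ipC ipDl !(ipC w). Qed.

Lemma ipNr u w : ip w (- u) = - ip w u.
Proof. by rewrite ipC ipNl ipC. Qed.

Lemma ip_norm2 u : ip u u = `|u| ^+ 2.
Proof.
have [ip_ge0|ip_lt0] := leP 0 (ip u u).
  by case: ip_inner => _ _ ->; rewrite sqr_sqrtr.
have : `|u| = 0 by case: ip_inner => _ _ ->; rewrite ltr0_sqrtr.
by move/normr0_eq0 => u0; move: ip_lt0; rewrite u0 ip0l ltxx.
Qed.

Lemma psd_cauchy_schwarz A : psd_selfadjoint ip A ->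
  forall u w, ip (A u) w ^+ 2 <= ip (A u) u * ip (A w) w.
Proof.
case=> A_lin A_sym A_psd u w; apply: quadratic_ge0_discriminant => // t.
have := A_psd ((- t) *: w + u).
rewrite A_lin ipZDl !ipDr !ipZr (A_sym w u) (ipC w (A u)) => ?; lra.
Qed.

Lemma ip_cauchy_schwarz u w : `|ip u w| <= `|u| * `|w|.
Proof.
have id_psd : psd_selfadjoint ip id by split=> // v; rewrite ip_norm2 sqr_ge0.
have := psd_cauchy_schwarz _ id_psd u w; rewrite /= !ip_norm2 -exprMn -real_normK ?num_real //.
by rewrite ler_sqr // nnegrE ?mulr_ge0.
Qed.

Lemma lbfgs_update_psd B s y : psd_selfadjoint ip B -> 0 < ip y s ->
  psd_selfadjoint ip (lbfgs_update ip B s y).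
Proof.
move=> B_psd ys_gt0; have [B_lin B_sym B_nneg] := B_psd; rewrite /lbfgs_update; split.
- move=> a u v; rewrite B_lin ![ip y _]ipC ![ip (B s) _]ipC !ipZDl.
  rewrite !mulrDl -!mulrA !scalerDl scalerBr scalerDr -!scalerA.
  by rewrite addrACA opprD [LHS]addrACA.
- move=> u v; rewrite !ipDl !ipNl !ipZl !ipDr !ipNr !ipZr B_sym.
  rewrite [ip (B s) v]ipC [ip (B s) u]ipC -!B_sym [ip y v]ipC [ip y u]ipC.
  ring.
- move=> v; rewrite !ipDl !ipNl !ipZl.
  have sBs_ge0 : 0 <= ip s (B s) by rewrite ipC.
  have y_term : 0 <= ip y v / ip y s * ip y v.
    by rewrite mulrAC -expr2 divr_ge0 ?sqr_ge0 ?ltW.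
  have [sBs0|sBs_neq0] := eqVneq (ip s (B s)) 0.
    by rewrite sBs0 invr0 mulr0 mul0r subr0 addr_ge0.
  have : ip (B s) v / ip s (B s) * ip (B s) v <= ip (B v) v.
    rewrite mulrAC -expr2 ler_pdivrMr ?lt_def ?sBs_neq0 //.
    by rewrite mulrC (ipC s); apply: psd_cauchy_schwarz.
  lra.
Qed.

Lemma lbfgs_matrix_psd {B0 l cs s y k} : psd_selfadjoint ip B0 -> 0 <= cs ->
  psd_selfadjoint ip (lbfgs_matrix ip B0 l cs s y k).
Proof.
move=> B0_psd cs_ge0; rewrite /lbfgs_matrix.
have curv_gt0 j : j \in stored ip l cs s y k -> 0 < ip (y j) (s j).
  by rewrite mem_filter => /andP[/(le_lt_trans _) -> //]; rewrite mulr_ge0 ?sqr_ge0.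
elim: (stored _ _ _ _ _ _) curv_gt0 B0 B0_psd => //= j js IH curv_gt0 B B_psd.
apply: IH => [i i_js|]; first by apply: curv_gt0; rewrite inE i_js orbT.
by apply: lbfgs_update_psd => //; apply: curv_gt0; rewrite inE eqxx.
Qed.

Lemma psd_norm_sqr_le A C : psd_selfadjoint ip A -> 0 < C ->
  (forall w, `|A w| <= C * `|w|) -> forall v, `|A v| ^+ 2 <= C * ip (A v) v.
Proof.
move=> A_psd C_gt0 A_le v; have [_ _ A_nneg] := A_psd.
have := psd_cauchy_schwarz _ A_psd v (A v); rewrite [ip (A v) (A v)]ip_norm2.
have AAv_le : ip (A (A v)) (A v) <= C * `|A v| ^+ 2.
  apply: le_trans (ler_norm _) _; apply: le_trans (ip_cauchy_schwarz _ _) _.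
  by rewrite expr2 mulrA ler_wpM2r.
move=> CS; apply: ler_of_sqr_le_mul; first by rewrite mulr_ge0 ?(ltW C_gt0).
by apply: (le_trans CS); rewrite -mulrA mulrCA ler_wpM2l.
Qed.

Lemma psd_selfadjoint_shift {t S} : 0 <= t -> sym_psd ip S ->
  psd_selfadjoint ip (fun v => t *: v + S v).
Proof.
move=> t_ge0 [[S_lin _] S_sym S_nneg]; split.
- by move=> a u v; rewrite S_lin !scalerDr !scalerA (mulrC t) addrACA.
- by move=> u v; rewrite ipDl ipZl ipDr ipZr S_sym.
- by move=> v; rewrite ipDl ipZl ip_norm2 addr_ge0 ?mulr_ge0 ?sqr_ge0.
Qed.

Lemma descent_direction_bounds {A C d gr} : psd_selfadjoint ip A -> 0 < C ->
  (forall v, `|A v| <= C * `|v| /\ `|v| <= C * `|A v|) -> A d = - gr ->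
  [/\ `|d| <= C * `|gr|, `|gr| <= C * `|d| & `|gr| ^+ 2 <= C * - ip gr d].
Proof.
move=> A_psd C_gt0 A_bounds Ad; split.
- by have [_] := A_bounds d; rewrite Ad normrN.
- by have [+ _] := A_bounds d; rewrite Ad normrN.
- have := psd_norm_sqr_le _ _ A_psd C_gt0 (fun w => (A_bounds w).1) d.
  by rewrite Ad normrN ipNl.
Qed.
End InnerProduct.

Lemma tau_rule_ge0 {R : realType} {V : normedModType R} (ip : V -> V -> R)
    gonly c0 C0 c1 c2 (sk zk gnext : V) t :
  0 <= c0 -> (c0%:E <= C0)%E -> 0 <= c1 ->
  tau_rule ip gonly c0 C0 c1 c2 sk zk gnext t -> 0 <= t.
Proof.
move=> c0_ge0 C0_ge_c0 c1_ge0.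
have P_ge0 u : (0%:E <= Pproj (omega_l c0 c1 c2 `|gnext|) (omega_u C0 c1 c2 `|gnext|) u)%E.
  rewrite /Pproj le_min lee_fin le_max /omega_l le_min c0_ge0 mulr_ge0 ?powR_ge0 ?orbT //=.
  by rewrite /omega_u le_max (le_trans _ C0_ge_c0).
by rewrite /tau_rule; case: ifP => _ /andP[+ _]; rewrite -lee_fin; apply: le_trans.
Qed.

Definition strongly_convex_with {R : realType} {V : normedModType R}
    (J : V -> R) (N : set V) (mu : R) :=
  forall a b (t : R), N a -> N b -> 0 <= t <= 1 ->
    J (t *: a + (1 - t) *: b) <=
      t * J a + (1 - t) * J b - mu / 2 * t * (1 - t) * `|a - b| ^+ 2.

Section Gradient.
Context {R : realType} {V : normedModType R} {ip : V -> V -> R}.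
Context {J : V -> R} {g : V -> V}.
Hypothesis J_grad : is_C1_gradient ip J g.

Lemma is_derive_along_ray (z h : V) (t : R) :
  is_derive t 1 (fun u : R => J (z + u *: h)) (ip (g (z + t *: h)) h).
Proof.
have [dJ dJE] := J_grad.1 (z + t *: h).
have quotE : (fun u : R => u^-1 *: (((fun u => J (z + u *: h)) \o shift t) (u *: 1)
                 - J (z + t *: h)))
   = (fun u : R => u^-1 *: ((J \o shift (z + t *: h)) (u *: h) - J (z + t *: h))).
  apply: funext => u /=; congr (_ *: (J _ - _)).
  by rewrite -[u *: (1 : R)]/(u * 1) mulr1 scalerDl addrCA.
apply: DeriveDef; first by rewrite /derivable quotE; apply: diff_derivable.
by rewrite /derive quotE -/(derive J (z + t *: h) h) deriveE // dJE.
Qed.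

Lemma mean_value_along_ray {z h : V} {T c : R} : 0 < T ->
  T * c < J (z + T *: h) - J z ->
  exists2 xi, 0 <= xi <= T & c < ip (g (z + xi *: h)) h.
Proof.
move=> T_gt0 incr.
have J_ray_cont : continuous (fun t : R => J (z + t *: h)).
  move=> t; apply: differentiable_continuous; apply/derivable1_diffP.
  exact: @ex_derive _ _ _ _ _ _ _ (is_derive_along_ray z h t).
have [xi xi_in mvt] := MVT_segment (ltW T_gt0)
  (fun t _ => is_derive_along_ray z h t) (continuous_subspaceT J_ray_cont).
exists xi; first by move: xi_in; rewrite in_itv.
by move: mvt incr; rewrite /= scale0r addr0 subr0 => ->; rewrite mulrC ltr_pM2r.
Qed.

Lemma gradient_le_of_slope_le (z h : V) (A B : R) :
  (forall t, 0 < t <= 1 -> J (z + t *: h) - J z <= t * (A + B * t)) ->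
  ip (g z) h <= A.
Proof.
move=> slope_le; have [dJ dJE] := J_grad.1 z.
have quot_cvg : (fun t : R => t^-1 *: ((J \o shift z) (t *: h) - J z)) @ 0^'+
    --> ip (g z) h.
  rewrite -dJE -(deriveE h dJ); apply: cvg_dnbhs_at_right; exact: diff_derivable.
have bound_cvg : (fun t : R => A + B * t) @ 0^'+ --> A + B * 0.
  apply: cvg_at_right_filter; apply: cvgD; first exact: cvg_cst.
  by apply: cvgM; [exact: cvg_cst | exact: cvg_id].
rewrite mulr0 addr0 in bound_cvg.
apply: (ler_cvg_to quot_cvg bound_cvg); near=> t.
have t_gt0 : 0 < t by near: t; exact: nbhs_right_gt.
have t_le1 : t <= 1 by near: t; exact: nbhs_right_le.
rewrite /= -[t^-1 *: _]/(t^-1 * _) ler_pdivrMl // [t *: h + z]addrC.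
by apply: slope_le; rewrite t_gt0 t_le1.
Unshelve. all: by end_near.
Qed.

Lemma strongly_convex_gradient_ineq {N mu a b} :
  strongly_convex_with J N mu -> N a -> N b ->
  ip (g b) (a - b) + mu / 2 * `|a - b| ^+ 2 <= J a - J b.
Proof.
move=> J_sc Na Nb; rewrite -lerBrDr.
apply: (gradient_le_of_slope_le _ _ _ (mu / 2 * `|a - b| ^+ 2)) => t /andP[t_gt0 t_le1].
have := J_sc a b t Na Nb; rewrite ltW //= t_le1 => /(_ isT).
rewrite (_ : t *: a + (1 - t) *: b = b + t *: (a - b)); last first.
  by rewrite scalerBl scale1r scalerBr addrCA.
move=> ?; lra.
Qed.
End Gradient.

Section LineSearchDescent.
Context {R : realType} {V : normedModType R} {ip : V -> V -> R}.
Hypothesis ip_inner : inner_product ip.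
Context {J : V -> R} {g : V -> V}.
Hypothesis J_grad : is_C1_gradient ip J g.
Context {beta sigma eta C : R} {x d : nat -> V} {alpha : nat -> R}.
Hypotheses (beta_gt0 : 0 < beta) (beta_lt1 : beta < 1).
Hypotheses (sigma_gt0 : 0 < sigma) (sigma_lt_eta : sigma < eta) (eta_lt1 : eta < 1).
Hypothesis C_gt0 : 0 < C.
Hypothesis alpha_gt0 : forall k, 0 < alpha k.
Hypothesis x_next : forall k, x k.+1 = x k + alpha k *: d k.
Hypothesis dir_le : forall k, `|d k| <= C * `|g (x k)|.
Hypothesis grad_le : forall k, `|g (x k)| <= C * `|d k|.
Hypothesis grad_sqr_le : forall k, `|g (x k)| ^+ 2 <= C * - ip (g (x k)) (d k).
Hypothesis line_search :
  (forall k, armijo_backtracking ip J g beta sigma (x k) (d k) (alpha k)) \/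
  (forall k, wolfe_powell ip J g sigma eta (x k) (d k) (alpha k)).

Let beta_ge0 : 0 <= beta := ltW beta_gt0.
Let sigma_ge0 : 0 <= sigma := ltW sigma_gt0.
Let C_ge0 : 0 <= C := ltW C_gt0.

Lemma step_eq k : x k.+1 - x k = alpha k *: d k.
Proof. by rewrite x_next addrC addKr. Qed.

Lemma slope_le0 k : ip (g (x k)) (d k) <= 0.
Proof.
rewrite -oppr_ge0 -(pmulr_rge0 _ C_gt0); exact: le_trans (sqr_ge0 _) (grad_sqr_le k).
Qed.

Lemma armijo_step k : J (x k.+1) <= J (x k) + alpha k * sigma * ip (g (x k)) (d k).
Proof.
by rewrite x_next; case: line_search => [/(_ k)[n [-> armijo_n _]]|/(_ k)[]].
Qed.

Lemma armijo_decrease k :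
  sigma * `|x k.+1 - x k| * `|g (x k)| <= C ^+ 2 * (J (x k) - J (x k.+1)).
Proof.
have sa_ge0 : 0 <= sigma * alpha k := mulr_ge0 sigma_ge0 (ltW (alpha_gt0 k)).
have := ler_wpM2l (mulr_ge0 sa_ge0 (normr_ge0 (g (x k)))) (dir_le k).
have := ler_wpM2l (mulr_ge0 C_ge0 sa_ge0) (grad_sqr_le k).
by have := armijo_step k; rewrite step_eq normrZ gtr0_norm //; nra.
Qed.

Lemma J_iter_nonincreasing : {homo J \o x : m n / (m <= n)%N >-> n <= m}.
Proof.
apply/nonincreasing_seqP => k /=; rewrite -subr_ge0.
rewrite -(pmulr_rge0 _ (exprn_gt0 2 C_gt0)); apply: le_trans (armijo_decrease k).
by rewrite !mulr_ge0 ?sigma_ge0.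
Qed.

Lemma cluster_value_le {xstar} : cluster (x @ \oo) xstar ->
  forall k, J xstar <= J (x k).
Proof.
move=> x_cluster k; rewrite leNgt; apply/negP => Jk_lt.
have J_cont : {for xstar, continuous J}.
  exact: differentiable_continuous (J_grad.1 xstar).1.
have below : (x @ \oo) [set v | J v <= J (x k)].
  by exists k => // n /= /J_iter_nonincreasing.
have above : nbhs xstar [set v | J (x k) < J v] by apply: cvgr_gt J_cont _ Jk_lt.
have [v [/= v_below v_above]] := x_cluster _ _ below above.
by have := le_lt_trans v_below v_above; rewrite ltxx.
Qed.

Lemma grad_le_of_curvature k w c : c < 1 ->
  (1 - c) * - ip (g (x k)) (d k) <= ip (g w - g (x k)) (d k) ->
  `|g (x k)| <= C ^+ 2 * `|g w - g (x k)| / (1 - c).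
Proof.
move=> c_lt1 curv; have c1_gt0 : 0 < 1 - c by rewrite subr_gt0.
apply: ler_of_sqr_le_mul; first by rewrite divr_ge0 ?mulr_ge0 ?C_ge0 ?(ltW c1_gt0).
apply: le_trans (grad_sqr_le k) _.
rewrite mulrAC ler_pdivlMr //.
have curv_le : (1 - c) * - ip (g (x k)) (d k) <= `|g w - g (x k)| * (C * `|g (x k)|).
  apply: le_trans curv (le_trans (ler_norm _) _).
  exact: le_trans (ip_cauchy_schwarz ip_inner _ _) (ler_wpM2l (normr_ge0 _) (dir_le k)).
by have := ler_wpM2l C_ge0 curv_le; lra.
Qed.

Lemma line_search_witness k :
  `|g (x k)| <= C * `|x k.+1 - x k| \/
  exists2 w, `|w - x k| <= `|x k.+1 - x k| / beta &
    (1 - eta) * - ip (g (x k)) (d k) <= ip (g w - g (x k)) (d k).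
Proof.
(* as sigma < eta, the curvature factor 1 - eta serves both line searches *)
have slope_nneg : 0 <= - ip (g (x k)) (d k) by rewrite oppr_ge0 slope_le0.
case: line_search => [/(_ k)[[|n] [alpha_k _ failed]]|/(_ k)[_ wolfe]].
- by left; rewrite step_eq alpha_k expr0 scale1r grad_le.
- right; have bn_gt0 : 0 < beta ^+ n by rewrite exprn_gt0.
  have incr : beta ^+ n * (sigma * ip (g (x k)) (d k)) < J (x k + beta ^+ n *: d k) - J (x k).
    by rewrite mulrA ltrBrDl ltNge; apply/negP; exact: failed.
  have [xi /andP[xi_ge0 xi_le] slope_gt] := mean_value_along_ray J_grad bn_gt0 incr.
  exists (x k + xi *: d k).
    rewrite step_eq alpha_k addrAC subrr add0r !normrZ (ger0_norm xi_ge0).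
    rewrite ger0_norm ?exprn_ge0 ?beta_ge0 // ler_pdivlMr // exprS mulrC -mulrA.
    by rewrite ler_wpM2l ?beta_ge0 // ler_wpM2r.
  have gap_ge0 : 0 <= eta - sigma by rewrite subr_ge0 (ltW sigma_lt_eta).
  by have := mulr_ge0 gap_ge0 slope_nneg; rewrite (ipBl ip_inner); lra.
- right; exists (x k.+1).
    by rewrite ler_pdivlMr // ler_piMr ?(ltW beta_lt1).
  by rewrite x_next (ipBl ip_inner); lra.
Qed.

Section NearCluster.
Context {xstar : V} {N : set V} {mu r : R}.
Hypothesis x_cluster : cluster (x @ \oo) xstar.
Hypothesis mu_gt0 : 0 < mu.
Hypothesis J_sc : strongly_convex_with J N mu.
Hypothesis r_gt0 : 0 < r.
Hypothesis ball_in_N : forall v, `|xstar - v| < r -> N v.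

Let xstar_in_N : N xstar.
Proof. by apply: ball_in_N; rewrite subrr normr0. Qed.

Lemma step_le_dist k : N (x k) ->
  `|x k.+1 - x k| <= C ^+ 2 / sigma * `|xstar - x k|.
Proof.
rewrite mulrAC ler_pdivlMr // mulrC => Nxk; set D := `|xstar - x k|; set G := `|g (x k)|.
have decr_le : J (x k) - J (x k.+1) <= D * G.
  have := strongly_convex_gradient_ineq J_grad J_sc xstar_in_N Nxk.
  have := cluster_value_le x_cluster k.+1.
  have := ip_cauchy_schwarz ip_inner (g (x k)) (xstar - x k).
  have := ler_norm (- ip (g (x k)) (xstar - x k)); rewrite normrN.
  have := mulr_ge0 (divr_ge0 (ltW mu_gt0) (ler0n _ 2)) (sqr_ge0 D).
  rewrite -/D -/G; lra.
have [G0|G_neq0] := eqVneq G 0.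
  have d_le0 : `|d k| <= 0 by have := dir_le k; rewrite -/G G0 mulr0.
  apply: (le_trans (y := 0)); last by rewrite mulr_ge0 ?sqr_ge0 ?normr_ge0.
  by rewrite step_eq normrZ gtr0_norm // !pmulr_rle0.
have G_gt0 : 0 < G by rewrite lt_def G_neq0 normr_ge0.
rewrite -(ler_pM2r G_gt0); apply: le_trans (armijo_decrease k) _.
by rewrite -[leRHS]mulrA ler_wpM2l ?sqr_ge0.
Qed.

Lemma iterate_grad_le k e : `|xstar - x k| < r -> `|xstar - x k| <= e ->
  (forall v, `|xstar - v| <= (1 + C ^+ 2 / sigma / beta) * `|xstar - x k| ->
     `|g xstar - g v| <= e) ->
  `|g (x k)| <= (C * (C ^+ 2 / sigma) + C ^+ 2 * 2 / (1 - eta)) * e.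
Proof.
move=> /ball_in_N/step_le_dist step_le xk_le_e g_close.
set D := `|xstar - x k| in step_le xk_le_e g_close; set a := C ^+ 2 / sigma in step_le *.
have D_ge0 : 0 <= D := normr_ge0 _.
have a_ge0 : 0 <= a by rewrite divr_ge0 ?sqr_ge0.
have e_ge0 : 0 <= e := le_trans D_ge0 xk_le_e.
have inv_ge0 : 0 <= (1 - eta)^-1 by rewrite invr_ge0 subr_ge0 ltW.
have K1e : C * `|x k.+1 - x k| <= C * a * e.
  rewrite -mulrA ler_wpM2l //; apply: le_trans step_le _.
  by rewrite ler_wpM2l.
have K2e_ge0 : 0 <= C ^+ 2 * 2 / (1 - eta) * e.
  by rewrite !mulr_ge0 ?sqr_ge0.
case: (line_search_witness k) => [grad_le_step|[w w_near curv]].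
  by rewrite mulrDl; lra.
have xk_close : `|g xstar - g (x k)| <= e.
  by apply: g_close; rewrite ler_peMl // lerDl !divr_ge0 ?sqr_ge0.
have w_close : `|g xstar - g w| <= e.
  apply: g_close; rewrite (_ : xstar - w = (xstar - x k) - (w - x k)); last first.
    by rewrite opprB addrA subrK.
  apply: le_trans (ler_normB _ _) _; rewrite -/D mulrDl mul1r lerD2l.
  apply: le_trans w_near _; rewrite mulrAC ler_wpM2r ?invr_ge0 //.
have gap_le : `|g w - g (x k)| <= 2 * e.
  rewrite (_ : g w - g (x k) = (g xstar - g (x k)) - (g xstar - g w)); last first.
    by rewrite opprB [RHS]addrC addrA subrK.
  by apply: le_trans (ler_normB _ _) _; lra.
have K1e_ge0 : 0 <= C * a * e := mulr_ge0 (mulr_ge0 C_ge0 a_ge0) e_ge0.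
apply: le_trans (grad_le_of_curvature _ _ _ eta_lt1 curv) _.
have := ler_wpM2l (mulr_ge0 (sqr_ge0 C) inv_ge0) gap_le.
lra.
Qed.

Lemma cluster_stationary : g xstar = 0.
Proof.
set K := C * (C ^+ 2 / sigma) + C ^+ 2 * 2 / (1 - eta).
set D := 1 + C ^+ 2 / sigma / beta.
have D_gt0 : 0 < D by rewrite ltr_pwDl ?divr_ge0 ?sqr_ge0.
apply: (norm_le_scale_eq0 _ (1 + K)).
  by rewrite addr_ge0 // /K addr_ge0 ?mulr_ge0 ?invr_ge0 ?sqr_ge0 // subr_ge0 ltW.
move=> e e_gt0; have [del del_gt0 g_near] := continuous_dist_lt (J_grad.2 xstar) e_gt0.
set m := Num.min r (Num.min del e).
have m_gt0 : 0 < m by rewrite !lt_min r_gt0 del_gt0.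
have [k] := cluster_seq_dist_lt x_cluster (divr_gt0 m_gt0 D_gt0).
rewrite ltr_pdivlMr // mulrC => D_dist_lt.
have dist_le : `|xstar - x k| <= D * `|xstar - x k| by rewrite ler_peMl // lerDl !divr_ge0 ?sqr_ge0.
move: (le_lt_trans dist_le D_dist_lt) (D_dist_lt); rewrite !lt_min.
move=> /and3P[dist_r _ dist_e] /and3P[_ D_dist_del _].
have g_close v : `|xstar - v| <= D * `|xstar - x k| -> `|g xstar - g v| <= e.
  by move=> v_close; apply/ltW/g_near/(le_lt_trans v_close).
have := iterate_grad_le k e dist_r (ltW dist_e) g_close; rewrite -/K.
have := g_close _ dist_le; have := ler_normD (g xstar - g (x k)) (g (x k)).
rewrite subrK; lra.
Qed.

Lemma quadratic_growth v : N v -> mu / 2 * `|xstar - v| ^+ 2 <= J v - J xstar.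
Proof.
move=> Nv; have := strongly_convex_gradient_ineq J_grad J_sc Nv xstar_in_N.
by rewrite cluster_stationary (ip0l ip_inner) add0r distrC.
Qed.

Lemma iterates_stay_close K rho : (1 + C ^+ 2 / sigma) * rho <= r ->
  `|xstar - x K| < rho -> J (x K) - J xstar < mu / 2 * rho ^+ 2 ->
  forall n, `|xstar - x (K + n)%N| < rho.
Proof.
move=> rho_small xK_close JK_close; elim=> [|n IH]; first by rewrite addn0.
have rho_ge0 : 0 <= rho := le_trans (normr_ge0 _) (ltW xK_close).
have a_ge0 : 0 <= C ^+ 2 / sigma by rewrite divr_ge0 ?sqr_ge0.
set k := (K + n)%N in IH *; rewrite addnS.
have xk_in_N : N (x k).
  by apply/ball_in_N/(lt_le_trans IH)/(le_trans _ rho_small); rewrite ler_peMl ?lerDl.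
have next_in_N : N (x k.+1).
  apply: ball_in_N; have := step_le_dist _ xk_in_N; have := ler_wpM2l a_ge0 (ltW IH).
  have := ler_normB (xstar - x k) (x k.+1 - x k); rewrite opprB addrA subrK; lra.
have Jk_le : J (x k.+1) <= J (x K) by apply: J_iter_nonincreasing; exact/leqW/leq_addr.
have := quadratic_growth _ next_in_N; rewrite -(ltr_pXn2r (ltn0Sn 1)) ?nnegrE //.
by rewrite -(ltr_pM2l (divr_gt0 mu_gt0 (ltr0Sn _ 1))); lra.
Qed.

Lemma cluster_limit : x @ \oo --> xstar.
Proof.
apply/cvgrPdist_lt => e e_gt0; set a := C ^+ 2 / sigma.
have a1_gt0 : 0 < 1 + a by rewrite ltr_pwDl // divr_ge0 ?sqr_ge0.
pose rho := Num.min e (r / (1 + a)).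
have rho_gt0 : 0 < rho by rewrite lt_min e_gt0 divr_gt0.
have rho_small : (1 + a) * rho <= r by rewrite mulrC -ler_pdivlMr // ge_min lexx orbT.
have J_cont : {for xstar, continuous J}.
  exact: differentiable_continuous (J_grad.1 xstar).1.
have [del del_gt0 J_near] := continuous_dist_lt J_cont
  (mulr_gt0 (divr_gt0 mu_gt0 (ltr0Sn _ 1)) (exprn_gt0 2 rho_gt0)).
have min_gt0 : 0 < Num.min del rho by rewrite lt_min del_gt0.
have [K] := cluster_seq_dist_lt x_cluster min_gt0.
rewrite lt_min => /andP[K_del K_rho].
have JK_close : J (x K) - J xstar < mu / 2 * rho ^+ 2.
  by have := J_near _ K_del; rewrite distrC => /(le_lt_trans (ler_norm _)).
exists K => // n /= Kn.
have := iterates_stay_close _ _ rho_small K_rho JK_close (n - K); rewrite subnKC //.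
by move/lt_le_trans; apply; rewrite ge_min lexx.
Qed.
End NearCluster.
End LineSearchDescent.

Theorem lemma4p14
  (R : realType) (V : completeNormedModType R) (ip : V -> V -> R)
  (J : V -> R) (g : V -> V)
  (l : nat) (c0 : R) (C0 : \bar R) (cs c1 c2 : R) (gonly : bool)
  (beta sigma eta L : R)
  (x : nat -> V) (S : nat -> V -> V) (tau alpha : nat -> R) (d : nat -> V)
  (xstar : V) (N : set V) :
  let Omega := [set v | J v <= J (x 0%N)] in
  let s := fun k => x k.+1 - x k in
  let y := fun k => g (x k.+1) - g (x k) in
  let B0 := fun k (v : V) => tau k *: v + S k v in
  let B := fun k => lbfgs_matrix ip (B0 k) l cs s y k in
  (* V is a real Hilbert space *)
  inner_product ip ->
  (* parameters of the algorithm *)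
  0 <= c0 -> (c0%:E <= C0)%E -> 0 < cs -> 0 < c1 -> 0 < c2 -> 0 < tau 0%N ->
  (* the iteration of SLBFGS *)
  (forall k, sym_psd ip (S k)) ->
  (forall k, B k (d k) = - g (x k)) ->
  (forall k, 0 < alpha k) ->
  (forall k, x k.+1 = x k + alpha k *: d k) ->
  (forall k, tau_rule ip gonly c0 C0 c1 c2 (s k) (y k - S k.+1 (s k))
                      (g (x k.+1)) (tau k.+1)) ->
  (* 1) J is C^1 with gradient g, and bounded below *)
  is_C1_gradient ip J g ->
  (exists m : R, forall v, m <= J v) ->
  (* 2) g is L-Lipschitz on Omega *)
  0 < L -> (forall u v, Omega u -> Omega v -> `|g u - g v| <= L * `|u - v|) ->
  (* 3) (||S_k||) bounded *)
  (exists M : R, forall k v, `|S k v| <= M * `|v|) ->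
  (* 4) line search *)
  0 < beta < 1 -> 0 < sigma < 1 -> sigma < eta < 1 ->
  ((forall k, armijo_backtracking ip J g beta sigma (x k) (d k) (alpha k)) \/
   (forall k, wolfe_powell ip J g sigma eta (x k) (d k) (alpha k))) ->
  (* 5) c0 = 0 only if sup_k ||(B_k^(0))^-1|| < oo *)
  (c0 = 0 -> exists C : R, forall k, (forall w, exists v, B0 k v = w) /\
                                     (forall v, `|v| <= C * `|B0 k v|)) ->
  (* 6) C0 = oo only if the [tau^s,tau^g] variant is used, or J is C^2 and
        int_0^1 J''(x_k + t s_k) dt - S_{k+1} is symmetric psd with bounded norms *)
  (C0 = +oo%E -> gonly \/
     (is_C2 g /\ exists M : R, forall k u v,
        let a := fun u v => avg_hessian_form ip g (x k) (s k) u v - ip (S k.+1 u) v in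
        [/\ a u v = a v u, 0 <= a u u & `|a u v| <= M * `|u| * `|v|])) ->
  (* 7) epsilon = 0 and the sequence is infinite: the stopping test never fires *)
  (forall k, g (x k.+1) <> 0) ->
  (* 8) (||B_k||) and (||B_k^-1||) bounded *)
  (exists C : R, forall k, (forall w, exists v, B k v = w) /\
       (forall v, `|B k v| <= C * `|v| /\ `|v| <= C * `|B k v|)) ->
  (* the lemma *)
  cluster (x @ \oo) xstar ->
  N `<=` Omega -> nbhs xstar N -> convex_set_seg N ->
  strongly_convex_on J N ->
  x @ \oo --> xstar.
Proof.
move=> Omega s y B0 B ip_inner c0_ge0 C0_ge_c0 cs_gt0 c1_gt0 _ tau0_gt0 S_psd B_d
  alpha_gt0 x_next tau_next J_grad _ _ _ _ /andP[beta_gt0 beta_lt1]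
  /andP[sigma_gt0 _] /andP[sigma_lt_eta eta_lt1] line_search _ _ _ [C B_bounded]
  x_cluster _ /nbhs_ballP[r r_gt0 ball_N] _ [mu mu_gt0 J_sc].
have tau_ge0 k : 0 <= tau k.
  case: k => [|k]; first exact: ltW.
  exact: tau_rule_ge0 c0_ge0 C0_ge_c0 (ltW c1_gt0) (tau_next k).
have B_psd k : psd_selfadjoint ip (B k).
  have B0_psd := psd_selfadjoint_shift ip_inner (tau_ge0 k) (S_psd k).
  exact: (lbfgs_matrix_psd ip_inner B0_psd (ltW cs_gt0) (l := l) (s := s) (y := y) (k := k)).
(* the constant of 8) need not be positive (V may be trivial) *)
pose C' := Num.max C 1.
have C'_gt0 : 0 < C' by rewrite lt_max ltr01 orbT.
have B_bounds k v : `|B k v| <= C' * `|v| /\ `|v| <= C' * `|B k v|.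
  have [_ /(_ v)[B_le B_inv_le]] := B_bounded k.
  have C_le : C <= C' by rewrite le_max lexx.
  by split; [apply: le_trans B_le _ | apply: le_trans B_inv_le _]; rewrite ler_wpM2r.
have dir_bounds k := descent_direction_bounds ip_inner (B_psd k) C'_gt0 (B_bounds k) (B_d k).
apply: (cluster_limit ip_inner J_grad beta_gt0 beta_lt1 sigma_gt0 sigma_lt_eta eta_lt1
  C'_gt0 alpha_gt0 x_next _ _ _ line_search x_cluster mu_gt0 J_sc r_gt0).
- by move=> k; have [] := dir_bounds k.
- by move=> k; have [] := dir_bounds k.
- by move=> k; have [] := dir_bounds k.
- by move=> v v_near; apply: ball_N; rewrite -ball_normE.
Qed.
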